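(* In any correlational scenario, every deterministic correlation whose signalling graph is not a siblings-on-cycles graph is antinomic, i.e. it is not deterministically consistent.
   Context: Parties $S_1,\dots,S_N$ with finite setting sets $A_k$ and outcome sets $X_k$; a deterministic correlation is $p(\vec x|\vec a)=\delta_{\vec x,f(\vec a)}$ with $f_k:\vec A\to X_k$. Its signalling graph is the directed graph on vertex set $[N]$ with an edge $k\to l$ ($k\ne l$) iff there exist $\vec a,\vec a'$ differing only in the $k$-th entry with $f_l(\vec a)\neq f_l(\vec a')$. A directed graph is a siblings-on-cycles graph if every directed cycle $v_1\to v_2\to\dots\to v_c\to v_1$ ($c\ge2$, distinct vertices) contains two distinct vertices $v_{s_1},v_{s_2}$ having a common parent $v_p$ (edges $v_p\to v_{s_1}$ and $v_p\to v_{s_2}$). Classical processes: for finite sets $I_k,O_k$, a conditional distribution $p(\vec i|\vec o)$ is a classical process if for all finite $A_k,X_k$ and all local interventions $p(x_k,o_k|a_k,i_k)$, $\sum_{\vec i,\vec o}\prod_k p(x_k,o_k|a_k,i_k)p(\vec i|\vec o)$ is a valid conditional distribution of $\vec x$ given $\vec a$. A process function is $\omega:\vec O\to\vec I$ such that $\delta_{\vec i,\omega(\vec o)}$ is a classical process. The deterministic-extrema polytope is the convex hull of $\{\delta_{\vec i,\omega(\vec o)}:\omega\text{ a process function}\}$. A correlation is deterministically consistent if $p(\vec x|\vec a)=\sum_{\vec i,\vec o}\prod_k p(x_k,o_k|a_k,i_k)\,p(\vec i|\vec o)$ for some finite $I_k,O_k$, local interventions $p(x_k,o_k|a_k,i_k)$,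 and $p(\vec i|\vec o)$ in the deterministic-extrema polytope; otherwise it is antinomic. *)

From HB Require Import structures.
From mathcomp Require Import all_boot all_order all_algebra.
From mathcomp Require Import reals.
Set Implicit Arguments. Unset Strict Implicit. Unset Printing Implicit Defensive.
Import Order.TTheory GRing.Theory Num.Theory.
Local Open Scope ring_scope.

Notation vec N T := {dffun forall k : 'I_N, T k}.

Definition det_corr (R : realType) (N : nat) (A X : 'I_N -> finType)
  (f : vec N A -> vec N X) : vec N A -> vec N X -> R :=
  fun a x => if f a == x then 1 else 0.

Definition sig_edge (N : nat) (A X : 'I_N -> finType)
  (f : vec N A -> vec N X) : rel 'I_N :=
  fun k l => (k != l) &&
    [exists a : vec N A, exists a' : vec N A,
       [forall j : 'I_N, (j != k) ==> (a j == a' j)] && (f a l != f a' l)].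

(* A cycle is a
   duplicate-free sequence s with e s_i s_{i+1} and e (last s) (head s). *)
Definition siblings_on_cycles (N : nat) (e : rel 'I_N) : Prop :=
  forall s : seq 'I_N, (2 <= size s)%N -> uniq s -> cycle e s ->
    exists s1 s2 vp : 'I_N,
      [/\ s1 \in s, s2 \in s, s1 != s2, e vp s1 & e vp s2].

Definition local_interventions (R : realType) (N : nat)
  (A X I O : 'I_N -> finType)
  (L : forall k : 'I_N, A k -> I k -> X k -> O k -> R) : Prop :=
  forall k (ak : A k) (ik : I k),
    (forall xk ok, 0 <= L k ak ik xk ok) /\
    \sum_(xk : X k) \sum_(ok : O k) L k ak ik xk ok = 1.

Definition compose (R : realType) (N : nat) (A X I O : 'I_N -> finType)
  (L : forall k : 'I_N, A k -> I k -> X k -> O k -> R)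
  (p : vec N I -> vec N O -> R) : vec N A -> vec N X -> R :=
  fun a x => \sum_(i : vec N I) \sum_(o : vec N O)
               (\prod_(k < N) L k (a k) (i k) (x k) (o k)) * p i o.

Definition valid_cond (R : realType) (N : nat) (A X : 'I_N -> finType)
  (q : vec N A -> vec N X -> R) : Prop :=
  forall a, (forall x, 0 <= q a x) /\ \sum_(x : vec N X) q a x = 1.

Definition classical_process (R : realType) (N : nat) (I O : 'I_N -> finType)
  (p : vec N I -> vec N O -> R) : Prop :=
  forall (A X : 'I_N -> finType)
         (L : forall k : 'I_N, A k -> I k -> X k -> O k -> R),
    local_interventions L -> valid_cond (compose L p).

Definition delta_fun (R : realType) (N : nat) (I O : 'I_N -> finType)
  (w : vec N O -> vec N I) : vec N I -> vec N O -> R :=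
  fun i o => if w o == i then 1 else 0.

Definition process_function (R : realType) (N : nat) (I O : 'I_N -> finType)
  (w : vec N O -> vec N I) : Prop :=
  classical_process (delta_fun R w).

Definition in_det_polytope (R : realType) (N : nat) (I O : 'I_N -> finType)
  (p : vec N I -> vec N O -> R) : Prop :=
  exists (m : nat) (lam : 'I_m -> R) (w : 'I_m -> vec N O -> vec N I),
    [/\ forall j, 0 <= lam j,
        \sum_(j < m) lam j = 1,
        forall j, process_function R (w j) &
        forall i o, p i o = \sum_(j < m) lam j * delta_fun R (w j) i o].

Definition det_consistent (R : realType) (N : nat) (A X : 'I_N -> finType)
  (q : vec N A -> vec N X -> R) : Prop :=
  exists (I O : 'I_N -> finType)
         (L : forall k : 'I_N, A k -> I k -> X k -> O k -> R)
         (p : vec N I -> vec N O -> R),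
    [/\ local_interventions L, in_det_polytope p &
        forall a x, q a x = compose L p a x].

Definition antinomic (R : realType) (N : nat) (A X : 'I_N -> finType)
  (q : vec N A -> vec N X -> R) : Prop := ~ det_consistent q.

From HB Require Import structures.
From mathcomp Require Import all_boot all_order all_algebra.
From mathcomp Require Import reals.
From Stdlib Require Import Classical_Prop.
Set Implicit Arguments. Unset Strict Implicit. Unset Printing Implicit Defensive.
Import Order.TTheory GRing.Theory Num.Theory.

(* Suppose the deterministic correlation f is reproduced by
   local interventions L and a convex combination of process functions.  Some
   process function w then has positive weight, so the correlation obtained
   from L and w alone is supported on the graph of f.  Selecting, for every
   party, one positive-probability pair (output, outcome) of its instrument
   turns L into a deterministic local feedback; since a process function has
   exactly one fixed point under any deterministic feedback, f is "simulated":
   for settings b, f b is read off the unique consistent outcome vector.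
   Two consequences follow: the input received by party k does not depend on
   its own setting, and f_l depends only on a_l and the parents of l.
   Now take a cycle of the signalling graph whose vertices have no common
   parent.  Using witnesses of the cycle edges, we choose settings as
   functions of the inputs so that, going once around the cycle, a boolean
   label flips exactly at one vertex -- a parity contradiction. *)

(* A boolean labelling of a duplicate-free cycle cannot change exactly at the
   single vertex v0: following the cycle, the label must come back changed. *)
Lemma cycle_single_flip (T : eqType) (s s' : seq T) (v0 : T) (B : T -> bool) :
  s = v0 :: s' -> uniq s ->
  ~ (forall u, u \in s -> B (next s u) = B u (+) (next s u == v0)).
Proof.
move=> Es Us HB.
have next_nth_s j : j < size s -> next s (nth v0 s j) = nth v0 s' j.
  by move=> Hj; rewrite next_nth mem_nth // index_uniq // Es.
have v0_notin : v0 \notin s' by move: Us; rewrite Es /= => /andP[].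
have B_const j : j <= size s' -> B (nth v0 s j) = B v0.
  elim: j => [|j IH] Hj; first by rewrite Es.
  have Hj' : j < size s by rewrite Es /= ltnS ltnW.
  have nth_ne : (nth v0 s' j == v0) = false.
    by apply/negbTE/eqP => E; move: v0_notin; rewrite -E mem_nth.
  have := HB _ (mem_nth v0 Hj').
  by rewrite next_nth_s // IH ?(ltnW Hj) // nth_ne addbF Es.
have Hlast : size s' < size s by rewrite Es.
have := HB _ (mem_nth v0 Hlast).
by rewrite next_nth_s // nth_default // eqxx B_const //; case: (B v0).
Qed.

Section SignallingGraph.
Variables (N : nat) (A X : 'I_N -> finType) (f : vec N A -> vec N X).

Lemma no_edge_no_signal k l : ~~ sig_edge f k l -> k != l ->
  forall b b' : vec N A, (forall j, j != k -> b j = b' j) -> f b l = f b' l.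
Proof.
rewrite /sig_edge => /nandP[/negPn->//|/existsPn H] _ b b' Hb.
move: (H b) => /existsPn /(_ b'); rewrite negb_and negbK => /orP[|/eqP//].
by move=> /forallPn[j]; rewrite negb_imply => /andP[jk /eqP]; rewrite Hb.
Qed.

(* f_l is determined by the settings of l and of its parents: change the
   other coordinates one at a time, by induction on how many differ. *)
Lemma parents_determine l (a a' : vec N A) :
  (forall k, (k == l) || sig_edge f k l -> a k = a' k) -> f a l = f a' l.
Proof.
move: {2}#|[pred k | a k != a' k]| (leqnn #|[pred k | a k != a' k]|) => n.
elim: n a => [|n IH] a Hn Hpar.
  suff -> : a = a' by [].
  apply/ffunP => k; apply/eqP; apply: contraTT Hn => nk.
  by rewrite -ltnNge; apply/card_gt0P; exists k.
case: (pickP [pred k | a k != a' k]) => [k /= nk|none]; last first.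
  suff -> : a = a' by [].
  by apply/ffunP => k; apply/eqP; move: (none k) => /= /negbFE.
have /norP[kl nedge] : ~~ ((k == l) || sig_edge f k l).
  by apply: contra nk => /Hpar ->.
pose a1 := (finfun (fun j => if j == k then a' j else a j) : vec N A).
have -> : f a l = f a1 l.
  by apply: (no_edge_no_signal nedge kl) => j /negbTE jk; rewrite ffunE jk.
apply: IH => [|j Hj]; last by rewrite ffunE; case: (j == k) => //; exact: Hpar.
rewrite -ltnS; apply: leq_trans Hn; apply: proper_card; apply/properP; split.
  by apply/subsetP => j; rewrite !inE ffunE; case: (j == k); rewrite ?eqxx.
by exists k; rewrite !inE ?ffunE ?eqxx.
Qed.

End SignallingGraph.

Local Open Scope ring_scope.

Lemma compose_delta (R : realType) (N : nat) (A X I O : 'I_N -> finType)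
  (L : forall k : 'I_N, A k -> I k -> X k -> O k -> R) (w : vec N O -> vec N I) a x :
  compose L (delta_fun R w) a x = \sum_o \prod_(k < N) L k (a k) (w o k) (x k) (o k).
Proof.
rewrite /compose exchange_big /=; apply: eq_bigr => o _.
rewrite (bigD1 (w o)) //= /delta_fun eqxx mulr1 [X in _ + X]big1 ?addr0 //.
by move=> i /negbTE; rewrite eq_sym => ->; rewrite mulr0.
Qed.

Lemma compose_convex (R : realType) (N : nat) (A X I O : 'I_N -> finType)
  (L : forall k : 'I_N, A k -> I k -> X k -> O k -> R) (p : vec N I -> vec N O -> R)
  (m : nat) (lam : 'I_m -> R) (w : 'I_m -> vec N O -> vec N I) :
  (forall i o, p i o = \sum_(j < m) lam j * delta_fun R (w j) i o) ->
  forall a x, compose L p a x = \sum_(j < m) lam j * compose L (delta_fun R (w j)) a x.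
Proof.
move=> Hp a x; rewrite /compose; symmetry.
under eq_bigr => j _ do rewrite mulr_sumr.
rewrite exchange_big; apply: eq_bigr => i _ /=.
under eq_bigr => j _ do rewrite mulr_sumr.
rewrite exchange_big; apply: eq_bigr => o _ /=.
by rewrite Hp mulr_sumr; apply: eq_bigr => j _; rewrite mulrCA.
Qed.

Lemma support_component (R : realType) (T : finType) (m : nat)
  (lam : 'I_m -> R) (q : 'I_m -> T -> R) (j0 : 'I_m) (t : T) :
  (forall j, 0 <= lam j) -> (forall j, 0 <= q j t) ->
  0 < lam j0 -> 0 < q j0 t -> \sum_(j < m) lam j * q j t != 0.
Proof.
move=> lam_ge0 q_ge0 lam_gt0 q_gt0; apply/eqP => /psumr_eq0P H.
have /eqP := H (fun j _ => mulr_ge0 (lam_ge0 j) (q_ge0 j)) j0 isT.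
by rewrite mulf_eq0 !gt_eqF.
Qed.

Lemma prod_indicator (R : realType) (N : nat) (P : 'I_N -> bool) :
  \prod_(k < N) (if P k then 1 else 0 : R) = if [forall k, P k] then 1 else 0.
Proof.
case: (boolP [forall k, P k]) => [/forallP H|/forallPn[k nk]].
  by apply: big1 => k _; rewrite H.
by rewrite (bigD1 k) //= (negbTE nk) mul0r.
Qed.

Lemma sum_indicator (R : realType) (T : finType) (P : pred T) :
  \sum_(t : T) (if P t then 1 else 0 : R) = #|P|%:R.
Proof. by rewrite -big_mkcond /= sumr_const. Qed.

Section FixedPoints.
Variables (R : realType) (N : nat) (I O : 'I_N -> finType) (w : vec N O -> vec N I).
Hypothesis w_process : process_function R w.

Definition is_fixpoint (h : forall k, I k -> O k) (o : vec N O) : bool :=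
  [forall k, o k == h k (w o k)].

(* A process function has exactly one fixed point under every deterministic
   feedback: plugging in the feedback as an intervention with trivial settings
   and outputs, the total probability (= 1) counts the fixed points. *)
Lemma process_unique_fixpoint (h : forall k, I k -> O k) :
  #|[pred o | is_fixpoint h o]| = 1%N.
Proof.
pose U := fun _ : 'I_N => (unit : finType).
pose Lh := fun k (_ : U k) (i : I k) (_ : U k) (o : O k) => if o == h k i then (1:R) else 0.
have Lh_local : local_interventions Lh.
  move=> k ak ik; split; first by move=> xk ok; rewrite /Lh; case: ifP.
  rewrite (big_pred1 tt); last by case.
  by rewrite /Lh -big_mkcond /= big_pred1_eq.
pose a0 := (finfun (fun k => tt) : vec N U).
have [_] := w_process Lh_local a0.
have -> : \sum_(x : vec N U) compose Lh (delta_fun R w) a0 x =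
          compose Lh (delta_fun R w) a0 a0.
  rewrite (eq_bigl (pred1 a0)) ?big_pred1_eq // => x /=.
  by apply/esym/eqP/ffunP => k; case: (x k); case: (a0 k).
rewrite compose_delta /Lh.
under eq_bigr => o _ do rewrite prod_indicator.
by rewrite sum_indicator => /eqP; rewrite pnatr_eq1 => /eqP.
Qed.

Lemma fixpoint_exists h : exists o, is_fixpoint h o.
Proof.
have /eqP := process_unique_fixpoint h.
by rewrite eqn_leq => /andP[_ /card_gt0P[o]]; exists o.
Qed.

Lemma fixpoint_unique h o o' : is_fixpoint h o -> is_fixpoint h o' -> o = o'.
Proof.
move=> Ho Ho'; have /eqP := process_unique_fixpoint h.
by rewrite eqn_leq => /andP[/card_le1_eqP H _]; apply: H; rewrite inE.
Qed.

End FixedPoints.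

Section Simulation.
Local Unset Implicit Arguments.
Variables (R : realType) (N : nat) (A X I O : 'I_N -> finType).
Variables (f : vec N A -> vec N X) (w : vec N O -> vec N I).
Variable L : forall k, A k -> I k -> X k -> O k -> R.
Hypothesis L_local : local_interventions L.
Hypothesis w_process : process_function R w.
Hypothesis w_supp : forall a x, 0 < compose L (delta_fun R w) a x -> x = f a.

Lemma instrument_support k (a : A k) (i : I k) :
  exists xo : X k * O k, 0 < L k a i xo.1 xo.2.
Proof.
have [L_ge0 L_sum1] := L_local k a i.
have [xk /= Hx] : exists xk, predT xk && (0 < \sum_ok L k a i xk ok).
  apply: psumr_neq0P => [xk _|]; first exact: sumr_ge0.
  by rewrite L_sum1; exact/eqP/oner_neq0.
have [ok /= Ho] : exists ok, predT ok && (0 < L k a i xk ok).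
  by apply: psumr_neq0P => //; apply/eqP; rewrite lt0r_neq0.
by exists (xk, ok).
Qed.

Definition sel k a i : X k * O k := xchoose (instrument_support k a i).

Lemma sel_pos k a i : 0 < L k a i (sel k a i).1 (sel k a i).2.
Proof. exact: (xchooseP (instrument_support k a i)). Qed.

Definition response (b : vec N A) k (i : I k) : O k := (sel k (b k) i).2.

Definition fixo (b : vec N A) : vec N O :=
  xchoose (fixpoint_exists w_process (response b)).

Lemma fixoP b : is_fixpoint w (response b) (fixo b).
Proof. exact: xchooseP. Qed.

Lemma fixo_unique b o : is_fixpoint w (response b) o -> fixo b = o.
Proof. by move=> Ho; apply: (fixpoint_unique w_process (fixoP b) Ho). Qed.

(* f is simulated: its outputs are the selected outputs at the fixed point,
   since this run of the protocol has positive probability. *)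
Lemma f_fixo b k : f b k = (sel k (b k) (w (fixo b) k)).1.
Proof.
suff <- : finfun (fun k => (sel k (b k) (w (fixo b) k)).1) = f b by rewrite ffunE.
apply: w_supp; rewrite compose_delta (bigD1 (fixo b)) //=; apply: ltr_wpDr.
  apply: sumr_ge0 => o _; apply: prodr_ge0 => k' _.
  by have [] := L_local k' (b k') (w o k').
apply: prodr_gt0 => k' _; rewrite ffunE.
by have /forallP/(_ k')/eqP-> := fixoP b; exact: sel_pos.
Qed.

Lemma adaptive_fixpoint (phi : forall k, I k -> A k) :
  exists o, fixo (finfun (fun k => phi k (w o k))) == o.
Proof.
have [o Ho] := fixpoint_exists w_process (fun k i => (sel k (phi k i) i).2).
exists o; apply/eqP/fixo_unique; apply/forallP => k.
by rewrite /response ffunE; exact: (forallP Ho k).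
Qed.

(* No party signals to its own input: its received input does not depend on
   its own setting.  Otherwise the adaptive choice "play a' k when receiving
   w (fixo a) k, else a k" would have no consistent outcome. *)
Lemma input_independent k (a a' : vec N A) : (forall j, j != k -> a j = a' j) ->
  w (fixo a) k = w (fixo a') k.
Proof.
move=> Ha.
have [o /eqP Ho] := adaptive_fixpoint (fun j i => if i == w (fixo a) j then a' j else a j).
move: Ho; set b := finfun _ => Ho.
case: (boolP (w o k == w (fixo a) k)) => E.
- suff Eb : b = a' by rewrite -Eb Ho; exact/esym/eqP.
  apply/ffunP => j; rewrite ffunE; case: ifP => // Hf.
  case: (eqVneq j k) => [jk|jk]; last exact: Ha.
  by subst j; rewrite E in Hf.
- suff Eb : b = a by rewrite -Ho Eb eqxx in E.
  apply/ffunP => j; rewrite ffunE; case: ifP => // /eqP Ej.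
  case: (eqVneq j k) => [jk|jk]; last by rewrite Ha.
  by subst j; rewrite Ej eqxx in E.
Qed.

Section Cycle.
Variables (s s' : seq 'I_N) (v0 : 'I_N).
Hypotheses (s_def : s = v0 :: s') (s_uniq : uniq s) (s_cycle : cycle (sig_edge f) s).
Hypothesis no_siblings : forall p x y, x \in s -> y \in s ->
  sig_edge f p x -> sig_edge f p y -> x = y.

Lemma next_inj x y : next s x = next s y -> x = y.
Proof. exact: (can_inj (prev_next s_uniq)). Qed.

Definition edge_witness u (p : vec N A * vec N A) : bool :=
  [forall j, (j != u) ==> (p.1 j == p.2 j)] && (f p.1 (next s u) != f p.2 (next s u)).

Lemma edge_witness_ex u : u \in s -> exists p, edge_witness u p.
Proof.
move=> us; have /andP[_ /existsP[a /existsP[a' H]]] := next_cycle s_cycle us.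
by exists (a, a').
Qed.

Lemma v0_in_s : v0 \in s. Proof. by rewrite s_def mem_head. Qed.

(* A chosen witness for every cycle edge (the default is never used). *)
Definition witness u : vec N A * vec N A :=
  odflt (xchoose (edge_witness_ex v0 v0_in_s)) [pick p | edge_witness u p].

Lemma witnessP u : u \in s -> edge_witness u (witness u).
Proof.
move=> us; rewrite /witness; case: pickP => //= none.
by have [p Hp] := edge_witness_ex u us; rewrite none in Hp.
Qed.

Definition W u := (witness u).1.
Definition W' u := (witness u).2.

Lemma W_agree u j : u \in s -> j != u -> W u j = W' u j.
Proof. by move=> /witnessP/andP[/forallP H _] ju; apply/eqP; move: (H j); rewrite ju. Qed.

Lemma W_signal u : u \in s -> f (W u) (next s u) != f (W' u) (next s u).
Proof. by move=> /witnessP/andP[]. Qed.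

Lemma W_ne u : u \in s -> W u u != W' u u.
Proof.
move=> us; apply: contra (W_signal u us) => /eqP E.
suff -> : W u = W' u by [].
by apply/ffunP => j; case: (eqVneq j u) => [->//|ju]; exact: W_agree.
Qed.

(* For a vertex p off the cycle, the cycle vertex whose successor is a child
   of p (unique, by the absence of siblings). *)
Definition child_pred p : 'I_N :=
  odflt p [pick u | (u \in s) && sig_edge f p (next s u)].

Lemma child_predE p u : u \in s -> sig_edge f p (next s u) -> child_pred p = u.
Proof.
move=> us e; rewrite /child_pred; case: pickP => [u' /andP[u's e']|none] /=.
  by apply: next_inj; apply: (no_siblings p); rewrite ?mem_next.
by move: (none u); rewrite us e.
Qed.

Definition phi x (i : I x) : A x :=
  if x \in s then
    (if ((sel x (W (prev s x) x) i).1 == f (W (prev s x)) x) (+) (x == v0)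
     then W x x else W' x x)
  else W (child_pred x) x.

Definition o_loop : vec N O := xchoose (adaptive_fixpoint phi).
Definition b : vec N A := finfun (fun k => phi k (w o_loop k)).

Lemma fixo_b : fixo b = o_loop.
Proof. exact/eqP/(xchooseP (adaptive_fixpoint phi)). Qed.

Definition patch u : vec N A :=
  finfun (fun m => if m == next s u then W u m else b m).

Section Edge.
Variable u : 'I_N.
Hypothesis us : u \in s.
Let v := next s u.

Lemma edge_uv : sig_edge f u v.
Proof. exact: next_cycle. Qed.

Lemma b_next : (b v == W v v) =
  ((sel v (W u v) (w o_loop v)).1 == f (W u) v) (+) (v == v0).
Proof.
rewrite ffunE /phi mem_next us /v prev_next //.
case: ifP => _; first by rewrite eqxx.
by rewrite eq_sym (negbTE (W_ne (next s u) _)) // mem_next.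
Qed.

Lemma b_choice : b u = W u u \/ b u = W' u u.
Proof. by rewrite ffunE /phi us; case: ifP; [left|right]. Qed.

(* The selected output of v is f at the patched settings: v's input does not
   depend on v's own setting. *)
Lemma sel_patch : (sel v (W u v) (w o_loop v)).1 = f (patch u) v.
Proof.
rewrite f_fixo ffunE eqxx -fixo_b; congr (sel _ _ _).1.
by apply: input_independent => j /negbTE jv; rewrite [patch u j]ffunE jv.
Qed.

(* Every parent k != u of v lies off the cycle, hence plays W u k = W' u k;
   so the patch agrees with either witness on v and its parents. *)
Lemma patch_parents (p : vec N A) : p = W u \/ p = W' u -> p u = b u ->
  f (patch u) v = f p v.
Proof.
move=> Hp pu; apply: parents_determine => k /orP[/eqP->|ekv].
  rewrite ffunE eqxx; case: Hp => -> //; apply: W_agree => //.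
  by rewrite eq_sym; case/andP: edge_uv.
have kv : k != v by case/andP: ekv.
rewrite ffunE (negbTE kv); case: (eqVneq k u) => [->//|ku].
have ks : k \notin s.
  apply: contra ku => ks; apply/eqP/next_inj.
  by apply: (no_siblings k); rewrite ?mem_next // next_cycle.
rewrite ffunE /phi (negbTE ks) (child_predE k u us ekv).
by case: Hp => -> //; exact: W_agree.
Qed.

Lemma label_flip : (b v == W v v) = (b u == W u u) (+) (v == v0).
Proof.
rewrite b_next sel_patch; congr (_ (+) _).
case: b_choice => E.
  by rewrite E eqxx (patch_parents (W u)) ?eqxx //; left.
rewrite E (patch_parents (W' u)); [|by right|by rewrite E].
rewrite [W' u u == _]eq_sym (negbTE (W_ne u us)) eq_sym.
exact/negbTE/W_signal.
Qed.

End Edge.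

Lemma sibling_free_cycle_contra : False.
Proof.
apply: (cycle_single_flip (B := fun x => b x == W x x) s_def s_uniq) => u us.
exact: label_flip.
Qed.

End Cycle.
End Simulation.

Arguments sibling_free_cycle_contra {R N A X I O f w L} L_local w_process w_supp
  {s s' v0}.

Theorem corollary7 (R : realType) (N : nat) (A X : 'I_N -> finType)
  (f : {dffun forall k : 'I_N, A k} -> {dffun forall k : 'I_N, X k}) :
  ~ siblings_on_cycles (sig_edge f) -> antinomic (det_corr R f).
Proof.
move=> not_soc [I [O [L [p [L_local [m [lam [w [lam_ge0 lam_sum1 w_proc p_def]]]] Hq]]]]].
apply: not_soc => s s_size s_uniq s_cycle; apply: NNPP => no_sib.
have no_siblings r x y : x \in s -> y \in s -> sig_edge f r x -> sig_edge f r y -> x = y.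
  move=> xs ys ex ey; case: (eqVneq x y) => // xy.
  by case: no_sib; exists x, y, r.
have [j0 /= lam_j0] : exists j0, predT j0 && (0 < lam j0).
  by apply: psumr_neq0P => //; rewrite lam_sum1; exact/eqP/oner_neq0.
have w_supp a x : 0 < compose L (delta_fun R (w j0)) a x -> x = f a.
  move=> Hpos; apply/eqP/negPn/negP => xf.
  have comp_ge0 j : 0 <= compose L (delta_fun R (w j)) a x.
    by have [] := w_proc j _ _ L L_local a.
  have := support_component (q := fun j x => compose L (delta_fun R (w j)) a x)
    lam_ge0 comp_ge0 lam_j0 Hpos.
  by rewrite -(compose_convex L p_def) -Hq /det_corr [f a == x]eq_sym (negbTE xf) eqxx.
case Es: s s_size => [|v0 s'] // _.
exact: (sibling_free_cycle_contra L_local (w_proc j0) w_supp Es s_uniq s_cycle no_siblings).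
Qed.
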